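(* Consider the mining game with $N\ge2$ miners, costs $0<c_1\le\dots\le c_N$, reward $R>0$ and capacity $\gamma\ge0$, at parameter values where the number $n$ of active miners does not change under small perturbations of the costs. For active miners $i\ne j$, the equilibrium profit $\pi_i^*$ of miner $i$ satisfies $$\frac{\partial\pi_i^*}{\partial c_i}<0,\qquad \frac{\partial\pi_i^*}{\partial c_j}>0.$$
   Context: Mining game: $N\ge2$ miners with costs-per-hash $0<c_1\le\dots\le c_N$; each miner $i$ chooses $h_i\ge0$, $H=\sum_jh_j$, payoff $\frac{h_i}{H}R-c_ih_i-\frac{\gamma}{2}h_i^2$ if $H>0$ and $0$ if $H=0$. The pure Nash equilibrium $h^*$ is unique; its active miners ($h_i^*>0$) are $1,\dots,n$ for some $2\le n\le N$, with $c^{(n)}=\sum_{i=1}^nc_i$, $H^*=\frac{\sqrt{(c^{(n)})^2+4(n-1)R\gamma}-c^{(n)}}{2\gamma}$ for $\gamma>0$ (and $(n-1)R/c^{(n)}$ for $\gamma=0$), and $h_i^*=H^*\frac{R-c_iH^*}{R+\gamma(H^* )^2}$ for $i\le n$. The equilibrium profit is $\pi_i^*=\frac{R}{H^*}h_i^*-c_ih_i^*-\frac{\gamma}{2}(h_i^* )^2$, and derivatives are taken of these closed-form expressions with $n$ held fixed. *)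

From Stdlib Require Import Reals Lra.
From Coquelicot Require Import Coquelicot.
Open Scope R_scope.

(* Miners are indexed 1..N; cost and hash profiles are functions nat -> R
   (only the values at 1..N matter). *)

Fixpoint sum1 (f : nat -> R) (n : nat) : R :=
  match n with
  | O => 0
  | S m => sum1 f m + f (S m)
  end.

Definition upd (f : nat -> R) (k : nat) (x : R) : nat -> R :=
  fun i => if Nat.eqb i k then x else f i.

Definition payoff (N : nat) (Rw gamma : R) (c h : nat -> R) (i : nat) : R :=
  let H := sum1 h N in
  if Rlt_dec 0 H then h i / H * Rw - c i * h i - gamma / 2 * (h i) ^ 2 else 0.

Definition is_NE (N : nat) (Rw gamma : R) (c h : nat -> R) : Prop :=
  forall i, (1 <= i <= N)%nat ->
    0 <= h i /\
    forall x, 0 <= x -> payoff N Rw gamma c (upd h i x) i <= payoff N Rw gamma c h i.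

(* closed-form equilibrium quantities, with the number n of active miners fixed *)
Definition Hstar (n : nat) (Rw gamma : R) (c : nat -> R) : R :=
  let cn := sum1 c n in
  if Rlt_dec 0 gamma
  then (sqrt (cn ^ 2 + 4 * (INR n - 1) * Rw * gamma) - cn) / (2 * gamma)
  else (INR n - 1) * Rw / cn.

Definition hstar (n : nat) (Rw gamma : R) (c : nat -> R) (i : nat) : R :=
  let H := Hstar n Rw gamma c in
  H * (Rw - c i * H) / (Rw + gamma * H ^ 2).

Definition pistar (n : nat) (Rw gamma : R) (c : nat -> R) (i : nat) : R :=
  let H := Hstar n Rw gamma c in
  let hi := hstar n Rw gamma c i in
  Rw / H * hi - c i * hi - gamma / 2 * hi ^ 2.

Definition profile (n : nat) (Rw gamma : R) (c : nat -> R) : nat -> R :=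
  fun i => if Nat.leb i n then hstar n Rw gamma c i else 0.

(* n is the number of active miners of the (pure Nash) equilibrium at costs c:
   the closed-form profile is a Nash equilibrium and miners 1..n are active *)
Definition active_count (N n : nat) (Rw gamma : R) (c : nat -> R) : Prop :=
  is_NE N Rw gamma c (profile n Rw gamma c) /\
  forall i, (1 <= i <= n)%nat -> 0 < hstar n Rw gamma c i.

(** Write [H] for the aggregate hash rate and [u = R - c_i H], which is positive
    because miner [i] is active.  Then the equilibrium profit has the closed form
    [pi_i = u^2 (2R + gamma H^2) / (2 (R + gamma H^2)^2)], which is strictly
    decreasing in [H], while [H] itself is the positive root of
    [gamma H^2 + C H = (n - 1) R] and hence strictly decreasing in the total cost
    [C = c_1 + ... + c_n].  A rival's cost therefore acts only through [H] and
    raises [pi_i].  A miner's own cost also lowers [u] directly; this direct effect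
    dominates the indirect one because [c_i < C] when another miner is active. *)

From Stdlib Require Import Reals Lra Lia.
From Coquelicot Require Import Coquelicot.
Open Scope R_scope.

Lemma sum1_nonneg (f : nat -> R) (m : nat) :
  (forall k, (1 <= k <= m)%nat -> 0 <= f k) -> 0 <= sum1 f m.
Proof.
  induction m as [|m IH]; intros f_ge0; simpl; [lra|].
  assert (0 <= f (S m)) by (apply f_ge0; lia).
  assert (0 <= sum1 f m) by (apply IH; intros; apply f_ge0; lia).
  lra.
Qed.

Lemma sum1_ge_term (f : nat -> R) (m j : nat) :
  (forall k, (1 <= k <= m)%nat -> 0 <= f k) -> (1 <= j <= m)%nat ->
  f j <= sum1 f m.
Proof.
  induction m as [|m IH]; intros f_ge0 Hj; [lia|]; simpl.
  assert (0 <= f (S m)) by (apply f_ge0; lia).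
  destruct (Nat.eq_dec j (S m)) as [->|ne].
  - assert (0 <= sum1 f m) by (apply sum1_nonneg; intros; apply f_ge0; lia). lra.
  - assert (f j <= sum1 f m) by (apply IH; [intros; apply f_ge0|]; lia). lra.
Qed.

Lemma sum1_ge_pair (f : nat -> R) (m i j : nat) :
  (forall k, (1 <= k <= m)%nat -> 0 <= f k) ->
  (1 <= i <= m)%nat -> (1 <= j <= m)%nat -> i <> j ->
  f i + f j <= sum1 f m.
Proof.
  induction m as [|m IH]; intros f_ge0 Hi Hj Hij; [lia|]; simpl.
  assert (f_ge0' : forall k, (1 <= k <= m)%nat -> 0 <= f k) by (intros; apply f_ge0; lia).
  destruct (Nat.eq_dec i (S m)) as [->|ne_i]; [|destruct (Nat.eq_dec j (S m)) as [->|ne_j]].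
  - assert (f j <= sum1 f m) by (apply sum1_ge_term; auto; lia). lra.
  - assert (f i <= sum1 f m) by (apply sum1_ge_term; auto; lia). lra.
  - assert (0 <= f (S m)) by (apply f_ge0; lia).
    assert (f i + f j <= sum1 f m) by (apply IH; auto; lia). lra.
Qed.

Lemma sum1_upd_out (f : nat -> R) (k m : nat) (t : R) :
  (m < k)%nat -> sum1 (upd f k t) m = sum1 f m.
Proof.
  induction m as [|m IH]; intros; simpl; [reflexivity|].
  rewrite IH by lia. unfold upd.
  destruct (Nat.eqb_spec (S m) k); [lia | reflexivity].
Qed.

Lemma sum1_upd (f : nat -> R) (k m : nat) (t : R) :
  (1 <= k <= m)%nat -> sum1 (upd f k t) m = sum1 f m - f k + t.
Proof.
  induction m as [|m IH]; intros Hk; [lia|]; simpl.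
  destruct (Nat.eq_dec k (S m)) as [->|ne].
  - rewrite sum1_upd_out by lia. unfold upd. rewrite Nat.eqb_refl. ring.
  - rewrite IH by lia. unfold upd.
    destruct (Nat.eqb_spec (S m) k); [lia | ring].
Qed.

Definition Hagg (n : nat) (Rw gamma x : R) : R :=
  if Rlt_dec 0 gamma
  then (sqrt (x ^ 2 + 4 * (INR n - 1) * Rw * gamma) - x) / (2 * gamma)
  else (INR n - 1) * Rw / x.

Lemma Hstar_upd (n k : nat) (Rw gamma t : R) (c : nat -> R) :
  (1 <= k <= n)%nat ->
  Hstar n Rw gamma (upd c k t) = Hagg n Rw gamma (sum1 c n - c k + t).
Proof.
  intros Hk. change (Hagg n Rw gamma (sum1 (upd c k t) n) = Hagg n Rw gamma (sum1 c n - c k + t)).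
  now rewrite sum1_upd.
Qed.

Section AggregateHashRate.

Variables (n : nat) (Rw gamma : R).
Hypotheses (n_ge2 : (2 <= n)%nat) (Rw_pos : 0 < Rw) (gamma_ge0 : 0 <= gamma).

Let INR_n_ge2 : 2 <= INR n.
Proof. apply (le_INR 2); exact n_ge2. Qed.

Lemma Hagg_pos (x : R) : 0 < x -> 0 < Hagg n Rw gamma x.
Proof.
  intros x_pos. unfold Hagg. destruct (Rlt_dec 0 gamma) as [g_pos|g_npos].
  - apply Rdiv_lt_0_compat; [|lra].
    assert (0 < (INR n - 1) * Rw * gamma) by (repeat apply Rmult_lt_0_compat; lra).
    assert (x < sqrt (x ^ 2 + 4 * (INR n - 1) * Rw * gamma)); [|lra].
    rewrite <- (sqrt_pow2 x) at 1 by lra.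
    apply sqrt_lt_1_alt. split; nra.
  - apply Rdiv_lt_0_compat; [apply Rmult_lt_0_compat|]; lra.
Qed.

(** Implicit differentiation of [gamma H^2 + x H = (n - 1) R]. *)
Lemma is_derive_Hagg (x : R) : 0 < x ->
  is_derive (Hagg n Rw gamma) x
    (- Hagg n Rw gamma x / (2 * gamma * Hagg n Rw gamma x + x)).
Proof.
  intros x_pos. unfold Hagg. destruct (Rlt_dec 0 gamma) as [g_pos|g_npos].
  - set (K := 4 * (INR n - 1) * Rw * gamma).
    assert (0 < K) by (unfold K; repeat apply Rmult_lt_0_compat; lra).
    assert (0 < sqrt (x ^ 2 + K)) by (apply sqrt_lt_R0; nra).
    auto_derive; [nra|].
    replace (2 * gamma * ((sqrt (x ^ 2 + K) - x) / (2 * gamma)) + x)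
      with (sqrt (x ^ 2 + K)) by (field; lra).
    replace (x * (x * 1)) with (x ^ 2) by ring.
    field; lra.
  - assert (gamma = 0) as -> by lra.
    auto_derive; [lra|]. field; lra.
Qed.

Lemma is_derive_Hagg_shift (C a : R) : 0 < C ->
  is_derive (fun t => Hagg n Rw gamma (C - a + t)) a
    (- Hagg n Rw gamma C / (2 * gamma * Hagg n Rw gamma C + C)).
Proof.
  intros C_pos.
  rewrite <- (scal_one (- Hagg n Rw gamma C / _)).
  apply (is_derive_comp (Hagg n Rw gamma) (fun t => C - a + t)).
  - replace (C - a + a) with C by ring. now apply is_derive_Hagg.
  - auto_derive; [exact I | reflexivity].
Qed.

End AggregateHashRate.

Definition profit (Rw gamma a H : R) : R :=
  (Rw - a * H) ^ 2 * (2 * Rw + gamma * H ^ 2) / (2 * (Rw + gamma * H ^ 2) ^ 2).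

Definition profit_dH (Rw gamma a H : R) : R :=
  - (Rw - a * H) * (a * (2 * Rw + gamma * H ^ 2) * (Rw + gamma * H ^ 2)
                    + (Rw - a * H) * gamma * H * (3 * Rw + gamma * H ^ 2))
  / (Rw + gamma * H ^ 2) ^ 3.

Definition profit_da (Rw gamma a H : R) : R :=
  - H * (Rw - a * H) * (2 * Rw + gamma * H ^ 2) / (Rw + gamma * H ^ 2) ^ 2.

Section Profit.

Variables (Rw gamma : R).
Hypotheses (Rw_pos : 0 < Rw) (gamma_ge0 : 0 <= gamma).

Let denom_pos (H : R) : 0 < Rw + gamma * H ^ 2.
Proof. nra. Qed.

Lemma pistar_eq_profit (n : nat) (c : nat -> R) (i : nat) :
  Hstar n Rw gamma c <> 0 ->
  pistar n Rw gamma c i = profit Rw gamma (c i) (Hstar n Rw gamma c).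
Proof.
  intros H_neq0. unfold pistar, hstar, profit.
  assert (D_pos := denom_pos (Hstar n Rw gamma c)).
  field; lra.
Qed.

Lemma hstar_pos_margin (n : nat) (c : nat -> R) (i : nat) :
  0 < Hstar n Rw gamma c -> 0 < hstar n Rw gamma c i ->
  0 < Rw - c i * Hstar n Rw gamma c.
Proof.
  unfold hstar. set (H := Hstar n Rw gamma c). intros H_pos h_pos.
  assert (D_pos := denom_pos H).
  apply (Rmult_lt_reg_l (H / (Rw + gamma * H ^ 2))); [apply Rdiv_lt_0_compat; lra|].
  replace (H / (Rw + gamma * H ^ 2) * (Rw - c i * H))
    with (H * (Rw - c i * H) / (Rw + gamma * H ^ 2)) by (field; lra).
  now rewrite Rmult_0_r.
Qed.

Lemma pistar_upd_profit (n k i : nat) (c : nat -> R) (t : R) :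
  (2 <= n)%nat -> (1 <= k <= n)%nat -> 0 < sum1 c n - c k + t ->
  pistar n Rw gamma (upd c k t) i
  = profit Rw gamma (upd c k t i) (Hagg n Rw gamma (sum1 c n - c k + t)).
Proof.
  intros n_ge2 Hk total_pos.
  assert (0 < Hagg n Rw gamma (sum1 c n - c k + t)) by (apply Hagg_pos; auto).
  rewrite pistar_eq_profit; rewrite Hstar_upd by exact Hk; [reflexivity | lra].
Qed.

Lemma is_derive_profit_H (a H : R) :
  is_derive (profit Rw gamma a) H (profit_dH Rw gamma a H).
Proof.
  assert (D_pos := denom_pos H).
  unfold profit, profit_dH. auto_derive; [nra|]. field; lra.
Qed.

Lemma is_derive_profit_along (Hf : R -> R) (x H dH : R) :
  Hf x = H -> is_derive Hf x dH ->
  is_derive (fun t => profit Rw gamma t (Hf t)) x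
    (profit_da Rw gamma x H + profit_dH Rw gamma x H * dH).
Proof.
  intros <- HdH.
  assert (D_pos := denom_pos (Hf x)).
  unfold profit, profit_da, profit_dH. auto_derive.
  - repeat split; try (exists dH; exact HdH).
    apply Rgt_not_eq; repeat apply Rmult_lt_0_compat; nra.
  - replace (Derive (fun t => Hf t) x) with dH by (symmetry; now apply is_derive_unique).
    field; lra.
Qed.

Lemma profit_dH_neg (a H : R) :
  0 < a -> 0 < H -> 0 < Rw - a * H -> profit_dH Rw gamma a H < 0.
Proof.
  intros a_pos H_pos u_pos. unfold profit_dH.
  assert (D_pos := denom_pos H).
  assert (0 < a * (2 * Rw + gamma * H ^ 2) * (Rw + gamma * H ^ 2)) by
    (repeat apply Rmult_lt_0_compat; nra).
  assert (0 <= (Rw - a * H) * gamma * H * (3 * Rw + gamma * H ^ 2)) by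
    (repeat apply Rmult_le_pos; nra).
  apply Rdiv_neg_pos; [nra | apply pow_lt; lra].
Qed.

(** [-H / (2 gamma H + C)] is the derivative of the aggregate hash rate in the total cost [C]. *)
Lemma profit_own_effect_neg (a C H : R) :
  0 < a -> a < C -> 0 < H -> 0 < Rw - a * H ->
  profit_da Rw gamma a H + profit_dH Rw gamma a H * (- H / (2 * gamma * H + C)) < 0.
Proof.
  intros a_pos a_lt_C H_pos u_pos.
  set (u := Rw - a * H) in *. set (s := gamma * H ^ 2). set (D := Rw + s).
  assert (s_ge0 : 0 <= s) by (unfold s; nra).
  assert (D_pos : 0 < D) by (unfold D; lra).
  assert (P_pos : 0 < 2 * gamma * H + C) by nra.
  assert (u_le : u <= Rw) by (unfold u; nra).
  replace (profit_da Rw gamma a H + profit_dH Rw gamma a H * (- H / (2 * gamma * H + C)))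
    with (H * u / ((2 * gamma * H + C) * D ^ 3)
          * ((a - C) * (2 * Rw + s) * D
             + gamma * H * (u * (3 * Rw + s) - 2 * (2 * Rw + s) * D)))
    by (unfold profit_da, profit_dH, D, s, u in *; field; lra).
  apply Rmult_pos_neg.
  - apply Rdiv_lt_0_compat; [nra | apply Rmult_lt_0_compat; [lra | apply pow_lt; lra]].
  - assert ((a - C) * (2 * Rw + s) * D < 0).
    { rewrite Rmult_assoc. apply Rmult_neg_pos; [lra | apply Rmult_lt_0_compat; lra]. }
    assert (u * (3 * Rw + s) <= 2 * (2 * Rw + s) * D) by (unfold D; nra).
    assert (0 <= gamma * H) by nra.
    nra.
Qed.

Lemma profit_rival_effect_pos (a C H : R) :
  0 < a -> 0 < C -> 0 < H -> 0 < Rw - a * H ->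
  0 < profit_dH Rw gamma a H * (- H / (2 * gamma * H + C)).
Proof.
  intros a_pos C_pos H_pos u_pos.
  assert (profit_dH Rw gamma a H < 0) by (apply profit_dH_neg; auto).
  assert (- H / (2 * gamma * H + C) < 0) by (apply Rdiv_neg_pos; nra).
  nra.
Qed.

End Profit.

Section EquilibriumProfit.

Variables (n : nat) (Rw gamma : R) (c : nat -> R).
Hypotheses (n_ge2 : (2 <= n)%nat) (Rw_pos : 0 < Rw) (gamma_ge0 : 0 <= gamma)
  (total_pos : 0 < sum1 c n).

Let C := sum1 c n.
Let H := Hstar n Rw gamma c.

Let pistar_upd_near (k i : nat) : (1 <= k <= n)%nat ->
  locally (c k) (fun t =>
    profit Rw gamma (upd c k t i) (Hagg n Rw gamma (C - c k + t))
    = pistar n Rw gamma (upd c k t) i).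
Proof.
  intros Hk. unfold C. apply (filter_imp (fun t => c k - sum1 c n < t)); [|apply open_gt; lra].
  intros t near. symmetry. apply pistar_upd_profit; auto; lra.
Qed.

Let is_derive_H_shift (a : R) :
  is_derive (fun t => Hagg n Rw gamma (C - a + t)) a (- H / (2 * gamma * H + C)).
Proof. now apply is_derive_Hagg_shift. Qed.

Let H_at_total (a : R) : Hagg n Rw gamma (C - a + a) = H.
Proof. change (Hagg n Rw gamma (C - a + a) = Hagg n Rw gamma C). f_equal. ring. Qed.

Lemma is_derive_pistar_own (i : nat) : (1 <= i <= n)%nat ->
  is_derive (fun t => pistar n Rw gamma (upd c i t) i) (c i)
    (profit_da Rw gamma (c i) H + profit_dH Rw gamma (c i) H * (- H / (2 * gamma * H + C))).
Proof.
  intros Hi.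
  apply (is_derive_ext_loc (fun t => profit Rw gamma t (Hagg n Rw gamma (C - c i + t)))).
  - eapply filter_imp; [|exact (pistar_upd_near i i Hi)].
    intros t <-. unfold upd. now rewrite Nat.eqb_refl.
  - apply is_derive_profit_along; [assumption.. | apply H_at_total | apply is_derive_H_shift].
Qed.

Lemma is_derive_pistar_rival (i j : nat) : (1 <= j <= n)%nat -> i <> j ->
  is_derive (fun t => pistar n Rw gamma (upd c j t) i) (c j)
    (profit_dH Rw gamma (c i) H * (- H / (2 * gamma * H + C))).
Proof.
  intros Hj Hij.
  apply (is_derive_ext_loc (fun t => profit Rw gamma (c i) (Hagg n Rw gamma (C - c j + t)))).
  - eapply filter_imp; [|exact (pistar_upd_near j i Hj)].
    intros t <-. unfold upd. now destruct (Nat.eqb_spec i j).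
  - rewrite Rmult_comm.
    apply (is_derive_comp (profit Rw gamma (c i))); [|apply is_derive_H_shift].
    rewrite H_at_total. now apply is_derive_profit_H.
Qed.

End EquilibriumProfit.

Theorem propositionB1 (N n : nat) (Rw gamma : R) (c : nat -> R) :
  (2 <= N)%nat ->
  (2 <= n <= N)%nat ->
  0 < Rw ->
  0 <= gamma ->
  (forall k, (1 <= k <= N)%nat -> 0 < c k) ->
  (forall k, (1 <= k < N)%nat -> c k <= c (S k)) ->
  active_count N n Rw gamma c ->
  (* n does not change under small perturbations of the costs *)
  (exists delta, 0 < delta /\
     forall c' : nat -> R,
       (forall k, (1 <= k <= N)%nat -> 0 < c' k /\ Rabs (c' k - c k) < delta) ->
       active_count N n Rw gamma c') ->
  forall i j, (1 <= i <= n)%nat -> (1 <= j <= n)%nat -> i <> j ->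
    (exists d, is_derive (fun t => pistar n Rw gamma (upd c i t) i) (c i) d /\ d < 0) /\
    (exists d, is_derive (fun t => pistar n Rw gamma (upd c j t) i) (c j) d /\ 0 < d).
Proof.
  (* With [n] held fixed, only the activity of the miners [1..n] is used. *)
  intros _ hn hR hg hc _ [_ active] _ i j hi hj hij.
  assert (ci_pos : 0 < c i) by (apply hc; lia).
  assert (cj_pos : 0 < c j) by (apply hc; lia).
  assert (c i + c j <= sum1 c n).
  { apply sum1_ge_pair; auto. intros k hk. left. apply hc. lia. }
  assert (H_pos : 0 < Hstar n Rw gamma c) by (apply Hagg_pos; lia || lra).
  assert (margin : 0 < Rw - c i * Hstar n Rw gamma c) by (apply hstar_pos_margin; auto).
  split; eexists; split.
  - apply is_derive_pistar_own; lia || lra.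
  - apply profit_own_effect_neg; auto; lra.
  - apply is_derive_pistar_rival; lia || lra.
  - apply profit_rival_effect_pos; auto; lra.
Qed.
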